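(* Let $X$ be a compact countable metric space and $f\colon X\to X$ a continuous map. If $f$ has a scrambled pair, then there exist $\delta>0$ and an infinite $\delta$-scrambled set for $f$.
   Context: For $\delta>0$, a pair $(u,v)$ of points is $\delta$-scrambled if $\liminf_{n\to\infty}d(f^n(u),f^n(v))=0$ and $\limsup_{n\to\infty}d(f^n(u),f^n(v))\ge\delta$; it is a scrambled pair if it is $\delta$-scrambled for some $\delta>0$. A set is $\delta$-scrambled if every pair of its distinct points is $\delta$-scrambled. *)

From Stdlib Require Import Reals.
Open Scope R_scope.

Record is_metric {X : Type} (d : X -> X -> R) : Prop := {
  met_nonneg : forall x y, 0 <= d x y;
  met_eq0 : forall x y, d x y = 0 <-> x = y;
  met_sym : forall x y, d x y = d y x;
  met_tri : forall x y z, d x z <= d x y + d y z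
}.

Definition is_open {X : Type} (d : X -> X -> R) (U : X -> Prop) : Prop :=
  forall x, U x -> exists r, 0 < r /\ forall y, d x y < r -> U y.

Definition compact_space {X : Type} (d : X -> X -> R) : Prop :=
  forall (I : Type) (U : I -> X -> Prop),
    (forall i, is_open d (U i)) -> (forall x, exists i, U i x) ->
    exists l : list I, forall x, exists i, List.In i l /\ U i x.

Definition countable_type (X : Type) : Prop :=
  exists g : X -> nat, forall x y, g x = g y -> x = y.

Definition continuous_map {X : Type} (d : X -> X -> R) (f : X -> X) : Prop :=
  forall x eps, 0 < eps -> exists del, 0 < del /\
    forall y, d x y < del -> d (f x) (f y) < eps.

Fixpoint iter {X : Type} (n : nat) (f : X -> X) (x : X) : X :=
  match n with O => x | S m => f (iter m f x) end.

(* liminf_{n} a n = 0 for a nonnegative sequence, unfolded *)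
Definition liminf_eq0 (a : nat -> R) : Prop :=
  forall eps, 0 < eps -> forall N, exists n, (N <= n)%nat /\ a n < eps.

(* limsup_{n} a n >= del, unfolded (limsup in the extended reals) *)
Definition limsup_ge (a : nat -> R) (del : R) : Prop :=
  forall eps, 0 < eps -> forall N, exists n, (N <= n)%nat /\ del - eps < a n.

Definition delta_scrambled_pair {X : Type} (d : X -> X -> R) (f : X -> X)
  (del : R) (u v : X) : Prop :=
  liminf_eq0 (fun n => d (iter n f u) (iter n f v)) /\
  limsup_ge (fun n => d (iter n f u) (iter n f v)) del.

Definition scrambled_pair {X : Type} (d : X -> X -> R) (f : X -> X) (u v : X) : Prop :=
  exists del, 0 < del /\ delta_scrambled_pair d f del u v.

Definition delta_scrambled_set {X : Type} (d : X -> X -> R) (f : X -> X)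
  (del : R) (S : X -> Prop) : Prop :=
  forall u v, S u -> S v -> u <> v -> delta_scrambled_pair d f del u v.

Definition infinite_set {X : Type} (S : X -> Prop) : Prop :=
  forall l : list X, exists x, S x /\ ~ List.In x l.

From Stdlib Require Import Reals Lra Lia List Arith Classical ClassicalEpsilon.
Open Scope R_scope.

(* The common limit points of the orbits of u
   and v, taken along the same times, form a closed invariant nonempty set.  In a
   countable compact space such a set contains a periodic point p, of period q:
   it contains a minimal set, obtained as a countable decreasing intersection of
   orbit closures, and by the Baire property this minimal set has an isolated
   point, to which its own orbit must return exactly.  Replacing p by a point of
   its orbit, p is a fixed point of g = f^q and a common limit point of the
   g-orbits of u and v.  The f-orbits of u and v do not converge together, so the
   g-orbit of one of them, x, accumulates at p without converging to p.
   Countability yields an annulus rin < d(p, .) < rout containing no point; the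
   g-orbit of x keeps crossing it, which makes any two of its points a
   (rout - rin)-scrambled pair for g, hence for f. *)

Lemma iter_add {X} (f : X -> X) n m x : iter (n + m) f x = iter n f (iter m f x).
Proof. induction n; simpl; congruence. Qed.

Lemma iter_succ_r {X} (f : X -> X) n x : iter n f (f x) = f (iter n f x).
Proof. induction n; simpl; congruence. Qed.

Lemma iter_mul {X} (f : X -> X) n q x : iter (n * q) f x = iter n (iter q f) x.
Proof. induction n; simpl; auto. rewrite iter_add. congruence. Qed.

Lemma iter_fixed {X} (f : X -> X) n p : f p = p -> iter n f p = p.
Proof. intros H; induction n; simpl; congruence. Qed.

Lemma iter_comm {X} (f : X -> X) n m x : iter n f (iter m f x) = iter m f (iter n f x).
Proof. rewrite <- !iter_add, Nat.add_comm. reflexivity. Qed.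

Lemma dependent_choice_nat (A : Type) (P : A -> Prop) (Rel : nat -> A -> A -> Prop) (a0 : A) :
  P a0 -> (forall i a, P a -> exists b, P b /\ Rel i a b) ->
  exists s : nat -> A, s O = a0 /\ (forall n, P (s n)) /\ (forall n, Rel n (s n) (s (S n))).
Proof.
  intros Ha0 Hstep.
  assert (next : forall i (a : {a | P a}), {b : {a | P a} | Rel i (proj1_sig a) (proj1_sig b)}).
  { intros i [a Ha].
    destruct (constructive_indefinite_description _ (Hstep i a Ha)) as [b [Hb Hab]].
    exists (exist _ b Hb); exact Hab. }
  pose (s := fix s n := match n with O => exist P a0 Ha0 | S i => proj1_sig (next i (s i)) end).
  exists (fun n => proj1_sig (s n)). repeat split.
  - intro n. exact (proj2_sig (s n)).
  - intro n. exact (proj2_sig (next n (s n))).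
Qed.

Lemma pigeonhole_frequently (P : nat -> R -> nat -> Prop) (Q : nat) :
  (forall k e e' m, P k e m -> e <= e' -> P k e' m) ->
  (forall e, 0 < e -> forall N, exists k, (k <= Q)%nat /\ exists m, (N <= m)%nat /\ P k e m) ->
  exists k, (k <= Q)%nat /\ forall e, 0 < e -> forall N, exists m, (N <= m)%nat /\ P k e m.
Proof.
  intros Hmon. induction Q as [|Q IH]; intros H.
  - exists O; split; auto. intros e He N. destruct (H e He N) as [k [Hk Hm]].
    replace k with O in Hm by lia. auto.
  - destruct (classic (forall e, 0 < e -> forall N, exists m, (N <= m)%nat /\ P (S Q) e m))
      as [Hy|Hn]; [exists (S Q); auto|].
    assert (Hfail : exists e0 N0, 0 < e0 /\ forall m, (N0 <= m)%nat -> ~ P (S Q) e0 m).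
    { apply NNPP; intro H1. apply Hn. intros e He N. apply NNPP; intro H2. apply H1.
      exists e, N; split; auto. intros m Hm Hp. apply H2; eauto. }
    destruct Hfail as [e0 [N0 [He0 HN0]]].
    destruct IH as [k [Hk Hk2]]; [|exists k; split; auto].
    intros e He N.
    destruct (H (Rmin e e0) ltac:(apply Rmin_glb_lt; auto) (Nat.max N N0)) as [k [Hk [m [Hm Hp]]]].
    destruct (Nat.eq_dec k (S Q)) as [->|Hne].
    + exfalso. apply (HN0 m); [lia|]. eapply Hmon; eauto. apply Rmin_r.
    + exists k; split; [lia|]. exists m; split; [lia|]. eapply Hmon; eauto. apply Rmin_l.
Qed.

Lemma forall_ge_of_periodic_step (P : nat -> Prop) (c m0 : nat) : (0 < c)%nat ->
  (forall m, (m0 <= m)%nat -> P m -> P (c + m)%nat) ->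
  (forall k, (k <= c)%nat -> P (k + m0)%nat) ->
  forall m, (m0 <= m)%nat -> P m.
Proof.
  intros Hc Hstep Hbase m. induction m as [m IH] using lt_wf_ind. intros Hm.
  destruct (Nat.le_gt_cases m (c + m0)) as [Hle|Hgt].
  - replace m with (m - m0 + m0)%nat by lia. apply Hbase. lia.
  - replace m with (c + (m - c))%nat by lia. apply Hstep; [lia|]. apply IH; lia.
Qed.

Lemma round_up_to_multiple n q : (0 < q)%nat -> exists m k, (k <= q)%nat /\ (n + k = m * q)%nat.
Proof.
  intros Hq. exists (S (n / q)), (q - n mod q)%nat.
  pose proof (Nat.div_mod_eq n q). pose proof (Nat.mod_upper_bound n q ltac:(lia)).
  split; [lia|]. simpl. nia.
Qed.

Lemma infinite_set_range {X} (s : nat -> X) : (forall a b, s a = s b -> a = b) ->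
  infinite_set (fun z => exists a, z = s a).
Proof.
  intros Hinj l. apply NNPP; intro Hn.
  assert (HND : NoDup (map s (seq 0 (S (length l))))).
  { apply NoDup_map_NoDup_ForallPairs; [intros a b _ _; apply Hinj|apply seq_NoDup]. }
  assert (Hinc : incl (map s (seq 0 (S (length l)))) l).
  { intros z Hz. apply in_map_iff in Hz. destruct Hz as [a [Ha _]].
    apply NNPP; intro Hz2. apply Hn. exists z. split; eauto. }
  pose proof (NoDup_incl_length HND Hinc). rewrite length_map, length_seq in H. lia.
Qed.

Definition cluster_point {T} (e : T -> T -> R) (s : nat -> T) (z : T) : Prop :=
  forall eps, 0 < eps -> forall N, exists n, (N <= n)%nat /\ e (s n) z < eps.

Definition seq_compact {T} (e : T -> T -> R) (K : T -> Prop) : Prop :=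
  forall s, (forall n, K (s n)) -> exists z, K z /\ cluster_point e s z.

(* A Baire category argument: a countable sequentially compact pseudometric
   space is not perfect.  Nested closed balls are chosen so that the i-th one
   avoids the points of code i; a cluster point of their centres lies in every
   ball, in particular in the one avoiding its own code. *)
Section IsolatedPoint.

Context {T : Type} (e : T -> T -> R) (K : T -> Prop) (code : T -> nat).
Hypotheses (e_ge0 : forall x y, 0 <= e x y) (e_sym : forall x y, e x y = e y x)
  (e_triangle : forall x y z, e x z <= e x y + e y z)
  (e_code : forall x y, code x = code y -> e x y = 0).

Lemma shrink_ball_avoiding_code c r i :
  (forall z, K z -> forall r, 0 < r -> exists y, K y /\ 0 < e z y < r) ->
  K c -> 0 < r -> exists c' r', K c' /\ 0 < r' /\
    (forall y, e c' y <= r' -> e c y < r) /\ (forall y, code y = i -> r' < e c' y).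
Proof.
  intros Hperf Hc Hr.
  destruct (classic (exists y0, code y0 = i)) as [[y0 Hy0]|Hnone].
  2:{ exists c, (r / 2). repeat split; auto; try lra.
      - intros y Hy; lra.
      - intros y Hy; exfalso; eauto. }
  destruct (Rlt_dec 0 (e c y0)) as [Hpos|Hzero].
  - exists c, (Rmin (r / 2) (e c y0 / 2)).
    pose proof (Rmin_l (r / 2) (e c y0 / 2)); pose proof (Rmin_r (r / 2) (e c y0 / 2)).
    repeat split; auto.
    + apply Rmin_glb_lt; lra.
    + intros y Hy; lra.
    + intros y Hy. assert (e y y0 = 0) by (apply e_code; congruence).
      pose proof (e_triangle c y y0); lra.
  - assert (Hcy0 : e c y0 = 0) by (pose proof (e_ge0 c y0); lra).
    destruct (Hperf c Hc (r / 2)) as [c' [Hc' [H1 H2]]]; [lra|].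
    exists c', (Rmin (r / 4) (e c c' / 2)).
    pose proof (Rmin_l (r / 4) (e c c' / 2)); pose proof (Rmin_r (r / 4) (e c c' / 2)).
    repeat split; auto.
    + apply Rmin_glb_lt; lra.
    + intros y Hy. pose proof (e_triangle c c' y); lra.
    + intros y Hy. assert (e y0 y = 0) by (apply e_code; congruence).
      pose proof (e_triangle c y0 y); pose proof (e_triangle c y c').
      rewrite (e_sym y c') in *. lra.
Qed.

Lemma exists_isolated_point : seq_compact e K -> (exists x, K x) ->
  exists z, K z /\ exists r, 0 < r /\ forall y, K y -> e z y < r -> e z y = 0.
Proof.
  intros Hcomp [x0 Hx0]. apply NNPP; intro Hno.
  assert (Hperf : forall z, K z -> forall r, 0 < r -> exists y, K y /\ 0 < e z y < r).
  { intros z Hz r Hr. apply NNPP; intro H1. apply Hno. exists z; split; auto.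
    exists r; split; auto. intros y Hy Hy2. apply NNPP; intro H2. apply H1.
    exists y; repeat split; auto. pose proof (e_ge0 z y); lra. }
  assert (e_refl : forall x, e x x = 0) by (intro; apply e_code; auto).
  destruct (dependent_choice_nat (T * R) (fun b => K (fst b) /\ 0 < snd b)
    (fun i b b' => (forall y, e (fst b') y <= snd b' -> e (fst b) y < snd b) /\
                   (forall y, code y = i -> snd b' < e (fst b') y)) (x0, 1))
    as [s [_ [Hs Hstep]]]; [simpl; split; auto; lra| |].
  { intros i [c r] [Hc Hr]. simpl in *.
    destruct (shrink_ball_avoiding_code c r i Hperf Hc Hr) as [c' [r' [Hc' [Hr' H]]]].
    exists (c', r'); simpl; auto. }
  pose (c n := fst (s n)). pose (r n := snd (s n)).
  assert (Hnest : forall i j, (i <= j)%nat -> forall y, e (c j) y <= r j -> e (c i) y <= r i).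
  { intros i j Hij; induction Hij; auto. intros y Hy. apply IHHij. left. apply (Hstep m); auto. }
  destruct (Hcomp c (fun n => proj1 (Hs n))) as [z [_ Hz]].
  assert (Hin : forall i, e (c i) z <= r i).
  { intro i. apply Rnot_lt_le; intro Hlt.
    destruct (Hz (e (c i) z - r i) ltac:(lra) i) as [n [Hn Hn2]].
    assert (e (c i) (c n) <= r i).
    { apply (Hnest i n Hn). rewrite e_refl. apply Rlt_le, (proj2 (Hs n)). }
    pose proof (e_triangle (c i) (c n) z); lra. }
  pose proof (proj2 (Hstep (code z)) z eq_refl). pose proof (Hin (S (code z))).
  unfold c, r in *. lra.
Qed.

End IsolatedPoint.

Section Metric.

Context {X : Type} (d : X -> X -> R).
Hypothesis d_metric : is_metric d.

Lemma dist_ge0 x y : 0 <= d x y.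
Proof. apply (met_nonneg d d_metric). Qed.

Lemma dist_sym x y : d x y = d y x.
Proof. apply (met_sym d d_metric). Qed.

Lemma dist_triangle x y z : d x z <= d x y + d y z.
Proof. apply (met_tri d d_metric). Qed.

Lemma dist_refl x : d x x = 0.
Proof. apply (met_eq0 d d_metric); reflexivity. Qed.

Lemma dist_eq0 x y : d x y = 0 -> x = y.
Proof. apply (met_eq0 d d_metric). Qed.

Lemma dist_diff_le p x y : Rabs (d p x - d p y) <= d x y.
Proof.
  pose proof (dist_triangle p x y); pose proof (dist_triangle p y x).
  rewrite (dist_sym y x) in *. apply Rabs_le; lra.
Qed.

Definition orbit (h : X -> X) (x : X) : nat -> X := fun n => iter n h x.

Definition closed_set (K : X -> Prop) : Prop :=
  forall z, (forall eps, 0 < eps -> exists y, K y /\ d y z < eps) -> K z.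

Definition invariant (h : X -> X) (K : X -> Prop) : Prop := forall z, K z -> K (h z).

Definition orbit_closure (h : X -> X) (w y : X) : Prop :=
  forall eps, 0 < eps -> exists n, d (iter n h w) y < eps.

Definition tendsto (s : nat -> X) (z : X) : Prop :=
  forall eps, 0 < eps -> exists N, forall n, (N <= n)%nat -> d (s n) z < eps.

Definition joint_cluster_point (s t : nat -> X) (z : X) : Prop :=
  forall eps, 0 < eps -> forall N,
    exists n, (N <= n)%nat /\ d (s n) z < eps /\ d (t n) z < eps.

Lemma continuous_map_iter h q : continuous_map d h -> continuous_map d (iter q h).
Proof.
  intros Hh; induction q; intros x eps He; simpl.
  - exists eps; split; auto.
  - destruct (Hh (iter q h x) eps He) as [e1 [He1 H1]].
    destruct (IHq x e1 He1) as [e2 [He2 H2]].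
    exists e2; split; auto.
Qed.

Lemma iter_close_upto h J z eps : continuous_map d h -> 0 < eps -> exists eta, 0 < eta /\
  forall y, d z y < eta -> forall k, (k <= J)%nat -> d (iter k h z) (iter k h y) < eps.
Proof.
  intros Hh. revert eps; induction J; intros eps He.
  - exists eps; split; auto. intros y Hy k Hk. replace k with O by lia; auto.
  - destruct (Hh (iter J h z) eps He) as [e1 [He1 H1]].
    destruct (IHJ (Rmin eps e1)) as [e2 [He2 H2]]; [apply Rmin_glb_lt; auto|].
    exists e2; split; auto. intros y Hy k Hk.
    destruct (Nat.eq_dec k (S J)) as [->|Hne].
    + apply H1. eapply Rlt_le_trans; [apply H2; auto|apply Rmin_r].
    + eapply Rlt_le_trans; [apply H2; auto; lia|apply Rmin_l].
Qed.

Lemma not_tendsto_far s z : ~ tendsto s z ->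
  exists del, 0 < del /\ forall N, exists n, (N <= n)%nat /\ del <= d (s n) z.
Proof.
  intros Hn. apply NNPP; intro Hno. apply Hn. intros eps He. apply NNPP; intro H1.
  apply Hno. exists eps; split; auto. intro N. apply NNPP; intro H2. apply H1.
  exists N. intros n Hn'. apply Rnot_le_lt. intro H3. apply H2. eauto.
Qed.

Lemma orbit_closure_self h w : orbit_closure h w w.
Proof. intros eps He. exists O. simpl. rewrite dist_refl; auto. Qed.

Lemma orbit_closure_closed h w : closed_set (orbit_closure h w).
Proof.
  intros z Hz eps He. destruct (Hz (eps / 2)) as [y [Hy Hyz]]; [lra|].
  destruct (Hy (eps / 2)) as [n Hn]; [lra|]. exists n.
  pose proof (dist_triangle (iter n h w) y z). lra.
Qed.

Lemma orbit_closure_invariant h w : continuous_map d h -> invariant h (orbit_closure h w).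
Proof.
  intros Hh y Hy eps He. destruct (Hh y eps He) as [e1 [He1 H1]].
  destruct (Hy e1 He1) as [n Hn]. exists (S n). simpl. rewrite dist_sym.
  apply H1. rewrite dist_sym; auto.
Qed.

Lemma invariant_iter h K n z : invariant h K -> K z -> K (iter n h z).
Proof. intros Hinv Hz; induction n; simpl; auto. Qed.

Lemma orbit_closure_sub h w K : closed_set K -> invariant h K -> K w ->
  forall y, orbit_closure h w y -> K y.
Proof.
  intros HK Hinv Hw y Hy. apply HK. intros eps He. destruct (Hy eps He) as [n Hn].
  exists (iter n h w). split; auto. apply invariant_iter; auto.
Qed.

Lemma joint_cluster_point_closed s t : closed_set (joint_cluster_point s t).
Proof.
  intros z Hz eps He N. destruct (Hz (eps / 2)) as [y [Hy Hyz]]; [lra|].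
  destruct (Hy (eps / 2) ltac:(lra) N) as [n [Hn [H1 H2]]]. exists n; split; auto.
  pose proof (dist_triangle (s n) y z); pose proof (dist_triangle (t n) y z). lra.
Qed.

Lemma joint_cluster_point_orbit_invariant f u v : continuous_map d f ->
  invariant f (joint_cluster_point (orbit f u) (orbit f v)).
Proof.
  intros Hf z Hz eps He N. destruct (Hf z eps He) as [e1 [He1 H1]].
  destruct (Hz e1 He1 N) as [n [Hn [H2 H3]]]. exists (S n); split; [lia|].
  unfold orbit; simpl. rewrite !(dist_sym _ (f z)).
  split; apply H1; rewrite dist_sym; auto.
Qed.

Lemma joint_cluster_point_iter_mul f u v p q : continuous_map d f -> (0 < q)%nat ->
  joint_cluster_point (orbit f u) (orbit f v) p ->
  exists k, joint_cluster_point (orbit (iter q f) u) (orbit (iter q f) v) (iter k f p).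
Proof.
  intros Hf Hq Hp.
  destruct (pigeonhole_frequently (fun k e m =>
      d (orbit (iter q f) u m) (iter k f p) < e /\ d (orbit (iter q f) v m) (iter k f p) < e) q)
    as [k [_ Hk]]; [intros; lra| |exists k; exact Hk].
  intros e He N. destruct (iter_close_upto f q p e Hf He) as [eta [Heta Hclose]].
  destruct (Hp eta Heta (N * q)%nat) as [n [Hn [Hu Hv]]].
  destruct (round_up_to_multiple n q Hq) as [m [k [Hk Hnk]]].
  exists k; split; auto. exists m; split; [nia|].
  unfold orbit. rewrite <- !iter_mul, <- Hnk, Nat.add_comm, !iter_add.
  rewrite !(dist_sym _ (iter k f p)).
  split; apply Hclose; auto; rewrite dist_sym; auto.
Qed.

(* If both [iter q f]-orbits converge to [p], then at every time [n = m q + k]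
   with [k < q] both [f]-orbits are close to [iter k f p]. *)
Lemma iter_mul_tendsto_not_limsup_ge f u v p q del : continuous_map d f -> (0 < q)%nat ->
  0 < del -> limsup_ge (fun n => d (iter n f u) (iter n f v)) del ->
  tendsto (orbit (iter q f) u) p -> ~ tendsto (orbit (iter q f) v) p.
Proof.
  intros Hf Hq Hdel Hsup Hu Hv.
  destruct (iter_close_upto f q p (del / 4) Hf ltac:(lra)) as [eta [Heta Hclose]].
  destruct (Hu eta Heta) as [Nu HNu]. destruct (Hv eta Heta) as [Nv HNv].
  destruct (Hsup (del / 2) ltac:(lra) ((Nu + Nv) * q)%nat) as [n [Hn Hfar]].
  pose proof (Nat.div_mod_eq n q). pose proof (Nat.mod_upper_bound n q ltac:(lia)).
  assert (Hdecomp : forall x, iter n f x = iter (n mod q) f (orbit (iter q f) x (n / q))).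
  { intro x. unfold orbit. rewrite <- iter_mul, <- iter_add. f_equal. lia. }
  assert (Hm : (Nu + Nv <= n / q)%nat) by nia.
  rewrite !Hdecomp in Hfar.
  pose proof (Hclose (orbit (iter q f) u (n / q))
    ltac:(rewrite dist_sym; apply HNu; lia) (n mod q) ltac:(lia)).
  pose proof (Hclose (orbit (iter q f) v (n / q))
    ltac:(rewrite dist_sym; apply HNv; lia) (n mod q) ltac:(lia)).
  pose proof (dist_triangle (iter (n mod q) f (orbit (iter q f) u (n / q))) (iter (n mod q) f p)
    (iter (n mod q) f (orbit (iter q f) v (n / q)))) as Htri.
  rewrite (dist_sym _ (iter (n mod q) f p)) in Htri. lra.
Qed.

Lemma delta_scrambled_set_iter_mul f q del S : (0 < q)%nat ->
  delta_scrambled_set d (iter q f) del S -> delta_scrambled_set d f del S.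
Proof.
  intros Hq HS u v Hu Hv Huv. destruct (HS u v Hu Hv Huv) as [Hinf Hsup]. split.
  - intros eps He N. destruct (Hinf eps He N) as [m [Hm Hd]].
    exists (m * q)%nat; split; [nia|]. rewrite !iter_mul; auto.
  - intros eps He N. destruct (Hsup eps He N) as [m [Hm Hd]].
    exists (m * q)%nat; split; [nia|]. rewrite !iter_mul; auto.
Qed.

Lemma shrink_to_orbit_closure f y K : continuous_map d f ->
  closed_set K -> invariant f K -> (exists z, K z) ->
  exists K', closed_set K' /\ invariant f K' /\ (exists z, K' z) /\ (forall z, K' z -> K z) /\
    (K' y -> forall w, K' w -> orbit_closure f w y).
Proof.
  intros Hf HK Hinv Hne.
  destruct (classic (exists w, K w /\ ~ orbit_closure f w y)) as [[w [Hw Hwy]]|Hall].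
  - exists (orbit_closure f w). repeat split.
    + apply orbit_closure_closed.
    + apply orbit_closure_invariant; auto.
    + exists w; apply orbit_closure_self.
    + apply orbit_closure_sub; auto.
    + intros Hy; contradiction.
  - exists K. repeat split; auto. intros _ w Hw. apply NNPP; intro Hwy. apply Hall; eauto.
Qed.

Section FixedPoint.

Variables (h : X -> X) (p x : X).
Hypotheses (h_cont : continuous_map d h) (h_fixed : h p = p)
  (p_cluster : cluster_point d (orbit h x) p).

Lemma orbit_pair_liminf_eq0 a b :
  liminf_eq0 (fun n => d (iter n h (iter a h x)) (iter n h (iter b h x))).
Proof.
  intros eps He N.
  destruct (iter_close_upto h (Nat.max a b) p (eps / 2) h_cont ltac:(lra)) as [eta [Heta Hclose]].
  destruct (p_cluster eta Heta N) as [n [Hn Hnear]]. exists n; split; auto.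
  rewrite dist_sym in Hnear. unfold orbit in Hnear. rewrite !(iter_comm h n).
  pose proof (Hclose _ Hnear a ltac:(lia)); pose proof (Hclose _ Hnear b ltac:(lia)).
  rewrite !iter_fixed in * by exact h_fixed.
  pose proof (dist_triangle (iter a h (iter n h x)) p (iter b h (iter n h x))).
  rewrite (dist_sym _ p) in H1. lra.
Qed.

(* Otherwise, from a time at which the next [c] iterates all lie in the ball,
   the orbit would stay in the ball forever, contradicting the far visits. *)
Lemma orbit_exits_ball rin c N : 0 < rin -> (0 < c)%nat ->
  (forall M, exists n, (M <= n)%nat /\ rin < d (iter n h x) p) ->
  exists m, (N <= m)%nat /\ d (iter m h x) p <= rin /\ rin < d (iter (c + m) h x) p.
Proof.
  intros Hrin Hc Hfar. apply NNPP; intro Hno.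
  destruct (iter_close_upto h c p rin h_cont Hrin) as [eta [Heta Hclose]].
  destruct (p_cluster eta Heta N) as [m0 [Hm0 Hnear]].
  unfold orbit in Hnear; rewrite dist_sym in Hnear.
  assert (Hin : forall m, (m0 <= m)%nat -> d (iter m h x) p <= rin).
  { apply forall_ge_of_periodic_step with c; auto.
    - intros m Hm Hm'. apply Rnot_lt_le; intro Hout. apply Hno. exists m; repeat split; auto; lia.
    - intros k Hk. pose proof (Hclose _ Hnear k Hk) as Hd.
      rewrite iter_fixed in Hd by exact h_fixed. rewrite iter_add, dist_sym. lra. }
  destruct (Hfar m0) as [m [Hm Hd]]. pose proof (Hin m Hm). lra.
Qed.

(* [iter a h x] and [iter b h x] are far apart whenever the orbit has just left
   the ball of radius [rin] around [p]: by the gap it then lies beyond [rout]. *)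
Lemma orbit_pair_limsup_ge rin rout a b : 0 < rin ->
  (forall z, d p z <= rin \/ rout <= d p z) ->
  (forall M, exists n, (M <= n)%nat /\ rin < d (iter n h x) p) -> (a < b)%nat ->
  limsup_ge (fun n => d (iter n h (iter a h x)) (iter n h (iter b h x))) (rout - rin).
Proof.
  intros Hrin Hgap Hfar Hab eps He N.
  destruct (orbit_exits_ball rin (b - a) (N + a) Hrin ltac:(lia) Hfar) as [m [Hm [Hin Hexit]]].
  exists (m - a)%nat. split; [lia|]. rewrite <- !iter_add.
  replace (m - a + a)%nat with m by lia. replace (m - a + b)%nat with (b - a + m)%nat by lia.
  destruct (Hgap (iter (b - a + m) h x)) as [Hle|Hge]; [rewrite dist_sym in Hle; lra|].
  pose proof (dist_triangle (iter (b - a + m) h x) (iter m h x) p) as Htri.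
  rewrite (dist_sym p) in Hge.
  rewrite (dist_sym (iter (b - a + m) h x) (iter m h x)) in Htri. lra.
Qed.

End FixedPoint.

Section Compact.

Hypothesis d_compact : compact_space d.

Lemma compact_cluster_point s : exists z, cluster_point d s z.
Proof.
  apply NNPP; intro Hn.
  assert (H : forall z, exists eps N, 0 < eps /\ forall n, (N <= n)%nat -> eps <= d (s n) z).
  { intro z. apply NNPP; intro H1. apply Hn; exists z. intros eps He N.
    apply NNPP; intro H2. apply H1. exists eps, N; split; auto.
    intros n Hn'. apply Rnot_lt_le. intro H3. apply H2. eauto. }
  set (U := fun (i : X * R * nat) y => let '(z, eps, N) := i in
        0 < eps /\ (forall n, (N <= n)%nat -> eps <= d (s n) z) /\ d z y < eps).
  destruct (d_compact _ U) as [l Hl].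
  - intros [[z eps] N] y [H0 [H1 H2]]. exists (eps - d z y); split; [lra|].
    intros y' Hy'. repeat split; auto. pose proof (dist_triangle z y y'); lra.
  - intros x. destruct (H x) as [eps [N [H0 H1]]]. exists (x, eps, N).
    repeat split; auto. rewrite dist_refl; auto.
  - set (M := list_max (map (fun i : X * R * nat => snd i) l)).
    destruct (Hl (s M)) as [[[z eps] N] [Hin [H0 [H1 H2]]]].
    assert (HN : (N <= M)%nat).
    { assert (Hle := le_n M). unfold M at 2 in Hle. apply list_max_le in Hle.
      rewrite Forall_forall in Hle. apply (Hle N). apply in_map_iff. exists (z, eps, N); auto. }
    specialize (H1 M HN). rewrite dist_sym in H1. lra.
Qed.

Lemma closed_seq_compact K : closed_set K -> seq_compact d K.
Proof.
  intros HK s Hs. destruct (compact_cluster_point s) as [z Hz]. exists z; split; auto.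
  apply HK. intros eps He. destruct (Hz eps He O) as [n [_ Hn]]. eauto.
Qed.

Lemma decreasing_closed_inter_nonempty (K : nat -> X -> Prop) :
  (forall n, closed_set (K n)) -> (forall n, exists z, K n z) ->
  (forall n z, K (S n) z -> K n z) -> exists z, forall n, K n z.
Proof.
  intros Hcl Hne Hdec. destruct (choice K Hne) as [s Hs].
  assert (Hnest : forall i j, (i <= j)%nat -> forall z, K j z -> K i z).
  { intros i j Hij; induction Hij; auto. }
  destruct (compact_cluster_point s) as [z Hz]. exists z. intro i. apply Hcl. intros eps He.
  destruct (Hz eps He i) as [n [Hn Hd]]. exists (s n); split; auto. apply (Hnest i n Hn), Hs.
Qed.

Lemma exists_joint_cluster_point s t : liminf_eq0 (fun n => d (s n) (t n)) ->
  exists z, joint_cluster_point s t z.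
Proof.
  intros Hinf.
  destruct (choice (fun k n => (k <= n)%nat /\ d (s n) (t n) < / INR (S k))) as [tm Htm].
  { intro k. apply Hinf. apply Rinv_0_lt_compat, lt_0_INR; lia. }
  destruct (compact_cluster_point (fun k => s (tm k))) as [z Hz]. exists z.
  intros eps He N. destruct (archimed_cor1 (eps / 2) ltac:(lra)) as [K [HK1 HK2]].
  destruct (Hz (eps / 2) ltac:(lra) (N + K)%nat) as [k [Hk Hd]].
  destruct (Htm k) as [Hk1 Hk2]. exists (tm k). repeat split; [lia|lra|].
  assert (/ INR (S k) <= / INR K).
  { apply Rinv_le_contravar; [apply lt_0_INR; lia|apply le_INR; lia]. }
  pose proof (dist_triangle (t (tm k)) (s (tm k)) z).
  rewrite (dist_sym (t (tm k)) (s (tm k))) in H0. cbv beta in Hd. lra.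
Qed.

Lemma annulus_seq_compact p a b :
  seq_compact (fun z w => Rabs (d p z - d p w)) (fun z => a <= d p z <= b).
Proof.
  intros s Hs. destruct (compact_cluster_point s) as [z Hz].
  assert (Hclose : cluster_point (fun z w => Rabs (d p z - d p w)) s z).
  { intros eps He N. destruct (Hz eps He N) as [n [Hn Hd]]. exists n; split; auto.
    pose proof (dist_diff_le p (s n) z). lra. }
  exists z; split; auto. split; apply Rnot_lt_le; intro Hout.
  - destruct (Hclose (a - d p z) ltac:(lra) O) as [n [_ Hn]].
    apply Rabs_def2 in Hn. specialize (Hs n). lra.
  - destruct (Hclose (d p z - b) ltac:(lra) O) as [n [_ Hn]].
    apply Rabs_def2 in Hn. specialize (Hs n). lra.
Qed.

Section Countable.

Hypothesis X_countable : countable_type X.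

(* The values [d p z] in [[a, b]] form a countable compact set of reals; next to
   one of its isolated points there is a gap. *)
Lemma distance_gap p a b : a < b -> exists rin rout,
  a <= rin < rout /\ rout <= b /\ forall z, d p z <= rin \/ rout <= d p z.
Proof.
  intros Hab. destruct X_countable as [code Hcode].
  pose (K z := a <= d p z <= b).
  destruct (classic (exists z, K z)) as [Hne|Hempty].
  2:{ exists a, b. repeat split; try lra. intro z.
      destruct (Rle_dec (d p z) a); auto. destruct (Rle_dec b (d p z)); auto.
      exfalso; apply Hempty; exists z; unfold K; lra. }
  pose (e z w := Rabs (d p z - d p w)).
  destruct (exists_isolated_point e K code) as [z0 [Hz0 [r0 [Hr0 Hiso]]]].
  - intros; apply Rabs_pos.
  - intros; apply Rabs_minus_sym.
  - intros x y z. unfold e.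
    replace (d p x - d p z) with ((d p x - d p y) + (d p y - d p z)) by ring. apply Rabs_triang.
  - intros x y H. rewrite (Hcode x y H). unfold e. rewrite Rminus_diag, Rabs_R0; auto.
  - apply annulus_seq_compact.
  - exact Hne.
  - pose (s0 := d p z0). pose (r := Rmin r0 ((b - a) / 2)).
    assert (Hr : 0 < r) by (apply Rmin_glb_lt; lra).
    assert (Hr0' : r <= r0) by apply Rmin_l.
    assert (Hrab : r <= (b - a) / 2) by apply Rmin_r.
    unfold K in Hz0. fold s0 in Hz0.
    assert (Hiso' : forall y, K y -> e z0 y < r -> e z0 y = 0).
    { intros y Hy Hey. apply Hiso; auto; lra. }
    unfold e in Hiso'. fold s0 in Hiso'.
    destruct (Rle_dec s0 ((a + b) / 2)).
    + exists s0, (s0 + r). repeat split; try lra. intro z.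
      destruct (Rle_dec (d p z) s0); auto. destruct (Rle_dec (s0 + r) (d p z)); auto.
      exfalso. assert (HKz : K z) by (unfold K; lra).
      pose proof (Hiso' z HKz) as Hz. rewrite Rabs_left in Hz by lra. lra.
    + exists (s0 - r), s0. repeat split; try lra. intro z.
      destruct (Rle_dec (d p z) (s0 - r)); auto. destruct (Rle_dec s0 (d p z)); auto.
      exfalso. assert (HKz : K z) by (unfold K; lra).
      pose proof (Hiso' z HKz) as Hz. rewrite Rabs_right in Hz by lra. lra.
Qed.

Lemma exists_minimal_subset f D : continuous_map d f ->
  closed_set D -> invariant f D -> (exists z, D z) ->
  exists K, closed_set K /\ invariant f K /\ (exists z, K z) /\ (forall z, K z -> D z) /\
    forall w y, K w -> K y -> orbit_closure f w y.
Proof.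
  intros Hf HD Hinv Hne. destruct X_countable as [code Hcode].
  destruct (dependent_choice_nat (X -> Prop)
    (fun K => closed_set K /\ invariant f K /\ exists z, K z)
    (fun i K K' => (forall z, K' z -> K z) /\
       forall y, code y = i -> K' y -> forall w, K' w -> orbit_closure f w y) D)
    as [s [Hs0 [Hs Hstep]]]; [auto| |].
  { intros i K [HK [HKi HKn]].
    destruct (classic (exists y, code y = i)) as [[y Hy]|Hnone].
    - destruct (shrink_to_orbit_closure f y K Hf HK HKi HKn) as [K' [H1 [H2 [H3 [H4 H5]]]]].
      exists K'. repeat split; auto. intros y' Hy'. rewrite (Hcode y' y) by congruence. auto.
    - exists K. repeat split; auto. intros y Hy. exfalso; eauto. }
  destruct (decreasing_closed_inter_nonempty s (fun n => proj1 (Hs n))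
    (fun n => proj2 (proj2 (Hs n))) (fun n => proj1 (Hstep n))) as [z Hz].
  exists (fun z => forall n, s n z). repeat split; eauto.
  - intros z' Hz' n. apply (proj1 (Hs n)). intros eps He.
    destruct (Hz' eps He) as [y [Hy Hyz]]. eauto.
  - intros z' Hz' n. apply (proj1 (proj2 (Hs n))); auto.
  - intros z' Hz'. rewrite <- Hs0. apply Hz'.
  - intros w y Hw Hy. apply (proj2 (Hstep (code y)) y eq_refl); auto.
Qed.

(* In a minimal set the orbit of [f z] returns arbitrarily close to [z];
   taking [z] isolated forces an exact return. *)
Lemma exists_periodic_point f D : continuous_map d f ->
  closed_set D -> invariant f D -> (exists z, D z) ->
  exists p q, D p /\ (0 < q)%nat /\ iter q f p = p.
Proof.
  intros Hf HD Hinv Hne.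
  destruct (exists_minimal_subset f D Hf HD Hinv Hne) as [K [HK [HKi [HKn [HKD Hmin]]]]].
  destruct X_countable as [code Hcode].
  destruct (exists_isolated_point d K code dist_ge0 dist_sym dist_triangle)
    as [z [Hz [r [Hr Hiso]]]]; auto.
  - intros x y H. rewrite (Hcode x y H). apply dist_refl.
  - apply closed_seq_compact; auto.
  - destruct (Hmin (f z) z (HKi z Hz) Hz r Hr) as [n Hn].
    rewrite iter_succ_r in Hn. exists z, (S n). repeat split; auto; [lia|]. simpl.
    apply dist_eq0. rewrite dist_sym. apply Hiso; [|rewrite dist_sym; auto].
    apply HKi, invariant_iter; auto.
Qed.

Lemma infinite_scrambled_set_of_fixed_point h p x : continuous_map d h -> h p = p ->
  cluster_point d (orbit h x) p -> ~ tendsto (orbit h x) p ->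
  exists del, 0 < del /\ exists S, infinite_set S /\ delta_scrambled_set d h del S.
Proof.
  intros Hh Hp Hcl Hnt.
  destruct (not_tendsto_far _ _ Hnt) as [del0 [Hdel0 Hfar]].
  destruct (distance_gap p (del0 / 2) del0 ltac:(lra))
    as [rin [rout [[Hrin Hio] [Hout Hgap]]]].
  assert (Hfar' : forall M, exists n, (M <= n)%nat /\ rin < d (iter n h x) p).
  { intro M. destruct (Hfar M) as [n [Hn Hd]]. exists n; split; auto. unfold orbit in Hd; lra. }
  pose proof (fun a b => orbit_pair_limsup_ge h p x Hh Hp Hcl rin rout a b
    ltac:(lra) Hgap Hfar') as Hsep.
  assert (Hpair : forall a b, a <> b ->
    delta_scrambled_pair d h (rout - rin) (iter a h x) (iter b h x)).
  { intros a b Hab. split; [apply (orbit_pair_liminf_eq0 h p x); auto|].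
    destruct (proj1 (Nat.lt_gt_cases a b) Hab) as [Hlt|Hgt]; [apply Hsep; auto|].
    intros eps He N. destruct (Hsep b a Hgt eps He N) as [n [Hn Hd]].
    exists n; split; auto. rewrite dist_sym; auto. }
  exists (rout - rin). split; [lra|].
  exists (fun z => exists a, z = iter a h x). split.
  - apply infinite_set_range. intros a b Hab. destruct (Nat.eq_dec a b) as [|Hne]; auto.
    exfalso. destruct (Hpair a b Hne) as [_ Hsup].
    destruct (Hsup ((rout - rin) / 2) ltac:(lra) O) as [n [_ Hn]].
    rewrite Hab, dist_refl in Hn. lra.
  - intros u v [a ->] [b ->] Huv. apply Hpair. intros ->. auto.
Qed.

End Countable.

End Compact.

End Metric.

Theorem corollary1p6 (X : Type) (d : X -> X -> R) (f : X -> X) :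
  is_metric d -> compact_space d -> countable_type X -> continuous_map d f ->
  (exists u v : X, scrambled_pair d f u v) ->
  exists del : R, 0 < del /\
    exists S : X -> Prop, infinite_set S /\ delta_scrambled_set d f del S.
Proof.
  intros Hm Hc Hcnt Hf [u [v [del [Hdel [Hinf Hsup]]]]].
  destruct (exists_periodic_point d Hm Hc Hcnt f
    (joint_cluster_point d (orbit f u) (orbit f v)) Hf) as [p [q [Hp [Hq Hpq]]]].
  { apply joint_cluster_point_closed; auto. }
  { apply joint_cluster_point_orbit_invariant; auto. }
  { apply exists_joint_cluster_point; auto. }
  destruct (joint_cluster_point_iter_mul d Hm f u v p q Hf Hq Hp) as [k Hk].
  assert (Hfix : iter q f (iter k f p) = iter k f p) by (rewrite iter_comm, Hpq; auto).
  assert (Hx : exists x, cluster_point d (orbit (iter q f) x) (iter k f p) /\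
                         ~ tendsto d (orbit (iter q f) x) (iter k f p)).
  { destruct (classic (tendsto d (orbit (iter q f) u) (iter k f p))) as [Hu|Hu];
      [exists v|exists u]; split; auto.
    - intros e He N. destruct (Hk e He N) as [m [Hm' [_ H]]]. eauto.
    - exact (iter_mul_tendsto_not_limsup_ge d Hm f u v _ q del Hf Hq Hdel Hsup Hu).
    - intros e He N. destruct (Hk e He N) as [m [Hm' [H _]]]. eauto. }
  destruct Hx as [x [Hcl Hnt]].
  destruct (infinite_scrambled_set_of_fixed_point d Hm Hc Hcnt (iter q f) (iter k f p) x
    (continuous_map_iter d f q Hf) Hfix Hcl Hnt) as [del' [Hdel' [S [HS HSs]]]].
  exists del'; split; auto. exists S; split; auto.
  apply (delta_scrambled_set_iter_mul d f q); auto.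
Qed.
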